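(* Let $k$ be a field with algebraic closure $\bar k$, $n\ge1$, $a_0,\ldots,a_{n-1}\in k$ with $a_0=0$, and $L(y)=y^{(n)}+\sum_{i=0}^{n-1}a_iy^{(i)}$. Let $\alpha_1,\ldots,\alpha_r\in\bar k$ be the distinct roots of $\lambda^n+\sum_{i=0}^{n-1}a_i\lambda^i$, with multiplicities $m_1+1,\ldots,m_r+1$ (so exactly one $\alpha_i$ equals $0$). Put $z_{j,t}=x^{[j]}e^{\alpha_tx}\in H\bar k$ for $1\le t\le r$, $0\le j\le m_t$, and $Z=(z_{0,1},\ldots,z_{m_1,1},\ldots,z_{0,r},\ldots,z_{m_r,r})$. Let $V=\{y\in Hk\mid L(y)=0\}$, let $y_1,\ldots,y_n$ be a $k$-basis of $V$, $Y=(y_1,\ldots,y_n)$, and let $T\in GL(n,\bar k)$ satisfy $YT=Z$. Let $u_t\in M(m_t+1,\bar k)$ be the nilpotent matrix with $1$'s on the superdiagonal and $0$ elsewhere ($u_t=0$ if $m_t=0$). Define $\Gamma_t=C_{\bar k}(u_t)\cap U(m_t+1,\bar k)$ if $\alpha_t=0$, and $\Gamma_t=C_{\bar k}(u_t)$ if $\alpha_t\neq0$. Then the map $\sigma\mapsto C_\sigma$, defined by $\sigma(Y)=YC_\sigma$, is a group isomorphism $$G(V|k)\;\cong\;GL(n,k)\cap T\,\{\mathrm{diag}(g_1,\ldots,g_r)\mid g_t\in\Gamma_t\}\,T^{-1},$$ where $\mathrm{diag}(g_1,\ldots,g_r)$ denotes the block-diagonal matrix with diagonal blocks $g_1,\l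dots,g_r$.
   Context: For a field $F$, $HF$ is the ring of Hurwitz series: all sequences $(a_n)_{n\in\mathbb N}$ in $F$, with termwise addition and product $(a_n)\cdot(b_n)=(c_n)$, where $c_n=\sum_{j=0}^n\binom{n}{j}a_jb_{n-j}$. It has derivation $\partial(a_0,a_1,\ldots)=(a_1,a_2,\ldots)$, written $y\mapsto y'$, with $y^{(i)}=\partial^iy$; it is applied entrywise to row vectors. $Hk\subseteq H\bar k$ naturally. Elements $c\in F$ are identified with $(c,0,0,\ldots)$. For $\beta\in F$, $e^{\beta x}=(1,\beta,\beta^2,\ldots)$. The divided powers are $x^{[i]}=(\delta^i_n)_{n\in\mathbb N}$. The entries of $Z$ form a $\bar k$-basis of the solution space of $L$ in $H\bar k$, and $Y$ is also such a basis, so $T$ exists. $G(V|k)$ denotes the group of $k$-differential automorphisms of $V$: the $k$-linear bijections $\sigma:V\to V$ with $\sigma(v')=\sigma(v)'$ for all $v\in V$ and $\sigma(c)=c$ for all $c\in k\cap V$. For $A\in M(m,F)$, $C_F(A)=\{T\in GL(m,F)\mid AT=TA\}$. $U(m,F)$ is the group of upper triangular matrices in $GL(m,F)$ with all diagonal entries $1$. *)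

From HB Require Import structures.
From Stdlib Require Import FunctionalExtensionality.
From mathcomp Require Import all_boot all_order all_algebra.
Set Implicit Arguments. Unset Strict Implicit. Unset Printing Implicit Defensive.
Import Order.TTheory GRing.Theory Num.Theory.
Local Open Scope ring_scope.

Definition hurwitz (F : Type) := nat -> F.

Definition hmul (F : comNzRingType) (a b : hurwitz F) : hurwitz F :=
  fun n => \sum_(j < n.+1) ('C(n, j))%:R * a j * b (n - j)%N.

Definition hderiv (F : Type) (y : hurwitz F) : hurwitz F := fun n => y n.+1.

Definition hconst (F : comNzRingType) (c : F) : hurwitz F :=
  fun n => if n == 0%N then c else 0.

Definition hexp (F : comNzRingType) (beta : F) : hurwitz F := fun n => beta ^+ n.

(* divided powers x^{[i]} = (delta^i_n)_n *)
Definition hdivpow (F : comNzRingType) (i : nat) : hurwitz F :=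
  fun n => if n == i then 1 else 0.

Definition hscale (F : comNzRingType) (c : F) (y : hurwitz F) : hurwitz F :=
  fun n => c * y n.

Lemma hmul_hconst (F : comNzRingType) (c : F) (y : hurwitz F) :
  hmul (hconst c) y = hscale c y.
Proof.
apply: functional_extensionality => n; rewrite /hmul /hscale /hconst.
rewrite big_ord_recl /= bin0 mul1r subn0 big1 ?addr0 // => i _.
by rewrite /bump /= mulr0 mul0r.
Qed.

Definition lcomb (F : comNzRingType) (n : nat) (c : 'I_n -> F)
  (y : 'I_n -> hurwitz F) : hurwitz F :=
  fun p => \sum_(i < n) c i * y i p.

Definition Lop (F : comNzRingType) (n : nat) (a : 'I_n -> F) (y : hurwitz F)
  : hurwitz F :=
  fun p => iter n (@hderiv F) y p
           + \sum_(i < n) hmul (hconst (a i)) (iter i (@hderiv F) y) p.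

Definition inV (F : comNzRingType) (n : nat) (a : 'I_n -> F) (y : hurwitz F) :=
  Lop a y = (fun _ => 0).

(* sigma (a map on HF, only its restriction to V matters) is a
   k-differential automorphism of V, i.e. its restriction to V lies in G(V|k) *)
Definition diffAut (F : comNzRingType) (n : nat) (a : 'I_n -> F)
  (sigma : hurwitz F -> hurwitz F) : Prop :=
  (forall v, inV a v -> inV a (sigma v)) /\
  (forall (c : F) v w, inV a v -> inV a w ->
      sigma (fun p => c * v p + w p) = (fun p => c * sigma v p + sigma w p)) /\
  (forall v w, inV a v -> inV a w -> sigma v = sigma w -> v = w) /\
  (forall w, inV a w -> exists2 v, inV a v & sigma v = w) /\
  (forall v, inV a v -> sigma (hderiv v) = hderiv (sigma v)) /\
  (forall c : F, inV a (hconst c) -> sigma (hconst c) = hconst c).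

Definition ushift (F : comNzRingType) (mt : nat) : 'M[F]_mt.+1 :=
  \matrix_(i, j) ((nat_of_ord j == (nat_of_ord i).+1)%:R).

Definition inGamma (F : fieldType) (alpha_t : F) (mt : nat) (g : 'M[F]_mt.+1) :=
  [/\ g \in unitmx, g *m ushift F mt = ushift F mt *m g &
      (alpha_t = 0 ->
        (forall i j : 'I_mt.+1, (j < i)%N -> g i j = 0) /\
        (forall i : 'I_mt.+1, g i i = 1))].

(* the row Z: index j of 'I_n corresponds (lexicographically) to the pair
   (t, j') with t = tagnat.sig1, j' = tagnat.sig2 *)
Definition Zvec (K : fieldType) (r : nat) (alpha : 'I_r -> K) (m : 'I_r -> nat)
  (n : nat) (hn : (\sum_(t < r) (m t).+1)%N = n) (j : 'I_n) : hurwitz K :=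
  let s := cast_ord (esym hn) j in
  hmul (hdivpow K (tagnat.sig2 s)) (hexp (alpha (tagnat.sig1 s))).

From Stdlib Require Import FunctionalExtensionality ClassicalEpsilon.
From mathcomp Require Import all_boot all_order all_algebra.
From mathcomp Require Import zify ring.
Import Order.TTheory GRing.Theory Num.Theory.
Local Open Scope ring_scope.
Set Implicit Arguments. Unset Strict Implicit. Unset Printing Implicit Defensive.

(* Every solution is determined by its first n coefficients, so the
   "initial value matrix" of the basis Y = (y_1..y_n) is invertible and every
   F-linear map on V is encoded by the matrix C with sigma(Y) = Y C.  The
   derivation acts on V through a matrix D (Y' = Y D), and since a_0 = 0 the
   constant series 1 lies in V, with coordinate vector e (1 = Y e).  Hence
   sigma |-> C_sigma identifies G(V|k) with
        { C in GL(n,k) | C D = D C  and  C e = e }.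
   Over the algebraic closure, Z = Y T with Z' = Z J, where J is the block
   diagonal Jordan matrix diag(alpha_t + u_t); thus J = T^-1 D T and, for the
   root alpha_t = 0, the first basis vector of block t is T^-1 e.  Matrices
   commuting with J are block diagonal with blocks in C(u_t) (a Sylvester-type
   argument, the alpha_t being distinct), and fixing that basis vector forces
   the block of the zero root to be unipotent upper triangular; this is exactly
   the product of the groups Gamma_t, conjugated by T. *)

Lemma iter_hderiv (F : Type) (i : nat) (y : hurwitz F) (p : nat) :
  iter i (@hderiv F) y p = y (i + p)%N.
Proof. by elim: i p => [//|i IH] p /=; rewrite /hderiv IH addnS. Qed.

Section SolutionSpace.
Variables (F : comNzRingType) (n : nat) (a : 'I_n -> F).

Lemma inVP (v : hurwitz F) :
  inV a v <-> forall p, v (n + p)%N + \sum_(i < n) a i * v (i + p)%N = 0.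
Proof.
have LopE p : Lop a v p = v (n + p)%N + \sum_(i < n) a i * v (i + p)%N.
  rewrite /Lop iter_hderiv; congr (_ + _); apply: eq_bigr => i _.
  by rewrite hmul_hconst /hscale iter_hderiv.
split => [Hv p | Hv]; first by rewrite -LopE Hv.
by apply: functional_extensionality => p; rewrite LopE Hv.
Qed.

Lemma inV_sum (I : Type) (s : seq I) (c : I -> F) (v : I -> hurwitz F) :
  (forall i, inV a (v i)) -> inV a (fun p => \sum_(i <- s) c i * v i p).
Proof.
move=> Hv; apply/inVP => p.
under [X in _ + X]eq_bigr do rewrite mulr_sumr.
rewrite exchange_big -big_split big1 //= => i _.
have /inVP/(_ p) Hi := Hv i.
transitivity (c i * (v i (n + p)%N + \sum_(j < n) a j * v i (j + p)%N)).
  by rewrite mulrDr mulr_sumr; congr (_ + _); apply: eq_bigr => j _; rewrite mulrCA.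
by rewrite Hi mulr0.
Qed.

Lemma inV_lcomb (c : 'I_n -> F) (y : 'I_n -> hurwitz F) :
  (forall i, inV a (y i)) -> inV a (lcomb c y).
Proof. exact: inV_sum. Qed.

Lemma inV_deriv (v : hurwitz F) : inV a v -> inV a (hderiv v).
Proof.
move=> /inVP Hv; apply/inVP => p; rewrite /hderiv.
by have := Hv p.+1; rewrite !addnS; under eq_bigr do rewrite addnS.
Qed.

Lemma inV_zero (v : hurwitz F) :
  inV a v -> (forall p, (p < n)%N -> v p = 0) -> forall p, v p = 0.
Proof.
move=> /inVP Hv v0 p; elim/ltn_ind: p => p IH.
case: (ltnP p n) => [/v0 //|hp].
have := Hv (p - n)%N; rewrite subnKC // big1 ?addr0 // => i _.
by rewrite IH ?mulr0 //; have := ltn_ord i; lia.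
Qed.

Lemma inV_hconst (c : F) :
  (forall i : 'I_n, nat_of_ord i = 0%N -> a i = 0) -> (0 < n)%N ->
  inV a (hconst c).
Proof.
move=> a0 n_gt0; apply/inVP => p; rewrite /hconst.
have -> : (n + p == 0)%N = false by apply/eqP; lia.
rewrite add0r big1 // => i _; case: eqP => [i_0|]; last by rewrite mulr0.
by rewrite a0 ?mul0r //; lia.
Qed.

Definition linear_on (sigma : hurwitz F -> hurwitz F) : Prop :=
  forall (c : F) v w, inV a v -> inV a w ->
    sigma (fun p => c * v p + w p) = (fun p => c * sigma v p + sigma w p).

Lemma linear_on_sum (sigma : hurwitz F -> hurwitz F) (I : Type) (s : seq I)
    (c : I -> F) (v : I -> hurwitz F) :
  linear_on sigma -> (forall i, inV a (v i)) ->
  sigma (fun p => \sum_(i <- s) c i * v i p) =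
  (fun p => \sum_(i <- s) c i * sigma (v i) p).
Proof.
move=> lin Hv.
have sigma0 : sigma (fun _ => 0) = (fun _ => 0).
  have V0 : inV a (fun _ => 0).
    by apply/inVP => p; rewrite add0r big1 // => i _; rewrite mulr0.
  have := lin 1 _ _ V0 V0.
  have -> : (fun _ : nat => 1 * 0 + 0 : F) = (fun _ => 0).
    by apply: functional_extensionality => p; rewrite mulr0 addr0.
  move=> E; apply: functional_extensionality => p.
  by have /= := congr1 (fun f => f p) E; rewrite mul1r -{1}[sigma _ p]addr0 => /addrI.
elim: s => [|j s IH].
  rewrite (_ : (fun p => _) = (fun _ => 0)) ?sigma0;
    by apply: functional_extensionality => p; rewrite big_nil.
rewrite (_ : (fun p => _) = (fun p => c j * v j p + \sum_(i <- s) c i * v i p)); last first.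
  by apply: functional_extensionality => p; rewrite big_cons.
rewrite lin ?IH //; last exact: inV_sum.
by apply: functional_extensionality => p; rewrite big_cons.
Qed.
End SolutionSpace.

Lemma mulmx_colP (R : pzSemiRingType) (p q : nat) (A B : 'M[R]_(p, q)) :
  (forall c : 'cV[R]_q, A *m c = B *m c) -> A = B.
Proof.
move=> AB; apply/matrixP => i j.
by have := congr1 (fun M : 'cV[R]_p => M i 0) (AB (delta_mx j 0)); rewrite -!colE !mxE.
Qed.

Lemma unitmx_ker (F : fieldType) (n : nat) (C : 'M[F]_n) :
  (forall c : 'cV[F]_n, C *m c = 0 -> c = 0) -> C \in unitmx.
Proof.
move=> ker; rewrite -unitmx_tr -row_free_unit; apply: inj_row_free => v vC.
apply: trmx_inj; rewrite trmx0; apply: ker.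
by rewrite -[C]trmxK -trmx_mul vC trmx0.
Qed.

Definition ev (F : Type) (n : nat) (f : 'I_n -> hurwitz F) (p : nat) : 'rV[F]_n :=
  \row_i f i p.

Lemma lcomb_ev (F : comNzRingType) (n q : nat) (X : 'M[F]_(n, q)) (j : 'I_q)
    (f : 'I_n -> hurwitz F) (p : nat) :
  lcomb (fun i => X i j) f p = (ev f p *m X) 0 j.
Proof. by rewrite /lcomb !mxE; apply: eq_bigr => i _; rewrite mxE mulrC. Qed.

Definition initmx (F : Type) (n : nat) (f : 'I_n -> hurwitz F) : 'M[F]_n :=
  \matrix_(p, i) f i p.

Lemma initmx_unit (F : fieldType) (n : nat) (a : 'I_n -> F) (f : 'I_n -> hurwitz F) :
  (forall i, inV a (f i)) ->
  (forall c, lcomb c f = (fun _ => 0) -> forall i, c i = 0) ->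
  initmx f \in unitmx.
Proof.
move=> fV free; apply: unitmx_ker => c fc; apply/matrixP => i j; rewrite ord1 mxE.
apply: (free (fun i => c i 0)); apply: functional_extensionality.
apply: inV_zero; first exact: inV_lcomb.
move=> p p_lt_n; rewrite lcomb_ev.
transitivity ((initmx f *m c) (Ordinal p_lt_n) 0); last by rewrite fc mxE.
by rewrite !mxE; apply: eq_bigr => l _; rewrite !mxE.
Qed.

Lemma ev_inj (F : fieldType) (n q : nat) (f : 'I_n -> hurwitz F) (X X' : 'M[F]_(n, q)) :
  initmx f \in unitmx -> (forall p, ev f p *m X = ev f p *m X') -> X = X'.
Proof.
move=> fU fX; apply: (can_inj (mulKmx fU)); apply/row_matrixP => p.
have rowE : row p (initmx f) = ev f p by apply/rowP => i; rewrite !mxE.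
by rewrite !row_mul rowE fX.
Qed.

Section SolutionBasis.
Variables (F : fieldType) (n : nat) (a : 'I_n -> F) (y : 'I_n -> hurwitz F).
Hypotheses (yV : forall i, inV a (y i))
  (y_free : forall c : 'I_n -> F, lcomb c y = (fun _ => 0) -> forall i, c i = 0)
  (y_span : forall v, inV a v -> exists c : 'I_n -> F, v = lcomb c y).

Definition comb (c : 'cV[F]_n) : hurwitz F := lcomb (fun i => c i 0) y.

Lemma combE (c : 'cV[F]_n) (p : nat) : comb c p = (ev y p *m c) 0 0.
Proof. exact: lcomb_ev. Qed.

Lemma lcomb_col (C : 'M[F]_n) (j : 'I_n) : lcomb (fun i => C i j) y = comb (col j C).
Proof.
apply: functional_extensionality => p.
by rewrite combE lcomb_ev colE mulmxA -colE [RHS]mxE.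
Qed.

Lemma comb_col1 (j : 'I_n) : comb (col j 1%:M) = y j.
Proof.
rewrite -lcomb_col; apply: functional_extensionality => p.
by rewrite lcomb_ev mulmx1 mxE.
Qed.

Lemma comb_sol (c : 'cV[F]_n) : inV a (comb c).
Proof. exact: inV_lcomb. Qed.

Lemma comb_lin (x : F) (u w : 'cV[F]_n) :
  comb (x *: u + w) = (fun p => x * comb u p + comb w p).
Proof.
by apply: functional_extensionality => p; rewrite !combE mulmxDr -scalemxAr !mxE.
Qed.

(* Coordinates are unique, since the initial value matrix is invertible. *)
Lemma comb_inj : injective comb.
Proof.
move=> c c' cc'; apply: (ev_inj (initmx_unit yV y_free)) => p; apply/rowP => j.
by rewrite ord1 -!combE cc'.
Qed.

Definition coord (v : hurwitz F) : 'cV[F]_n :=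
  epsilon (inhabits 0) (fun c => v = comb c).

Lemma coordK (v : hurwitz F) : inV a v -> comb (coord v) = v.
Proof.
move=> vV; symmetry; apply: (epsilon_spec (inhabits 0) (fun c => v = comb c)).
have [c ->] := y_span vV; exists (\col_i c i); rewrite /comb; congr lcomb.
by apply: functional_extensionality => i; rewrite mxE.
Qed.

Lemma combK : cancel comb coord.
Proof. by move=> c; apply: comb_inj; rewrite coordK //; apply: comb_sol. Qed.

Definition acts_by (sigma : hurwitz F -> hurwitz F) (C : 'M[F]_n) : Prop :=
  forall j, sigma (y j) = lcomb (fun i => C i j) y.

Definition mx_of (sigma : hurwitz F -> hurwitz F) : 'M[F]_n :=
  \matrix_(i, j) coord (sigma (y j)) i 0.

Lemma acts_by_mx_of (sigma : hurwitz F -> hurwitz F) :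
  (forall j, inV a (sigma (y j))) -> acts_by sigma (mx_of sigma).
Proof.
move=> sV j; rewrite lcomb_col -{1}(coordK (sV j)); congr comb.
by apply/colP => i; rewrite !mxE.
Qed.

Lemma acts_by_uniq (sigma : hurwitz F -> hurwitz F) (C C' : 'M[F]_n) :
  acts_by sigma C -> acts_by sigma C' -> C = C'.
Proof.
move=> sC sC'; apply/matrixP => i j.
have : comb (col j C) = comb (col j C') by rewrite -!lcomb_col -sC -sC'.
by move/comb_inj/colP/(_ i); rewrite !mxE.
Qed.

Lemma acts_by_comb (sigma : hurwitz F -> hurwitz F) (C : 'M[F]_n) :
  linear_on a sigma -> acts_by sigma C -> forall c, sigma (comb c) = comb (C *m c).
Proof.
move=> lin sC c; rewrite /comb [LHS](linear_on_sum _ _ lin yV).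
apply: functional_extensionality => p; rewrite lcomb_ev mulmxA mxE.
by apply: eq_bigr => i _; rewrite sC lcomb_ev mulrC.
Qed.

Lemma acts_by_comp (sigma tau : hurwitz F -> hurwitz F) (C D : 'M[F]_n) :
  linear_on a sigma -> acts_by sigma C -> acts_by tau D ->
  acts_by (sigma \o tau) (C *m D).
Proof.
move=> lin sC tD j.
by rewrite /= tD !lcomb_col (acts_by_comb lin sC) !colE mulmxA.
Qed.

Lemma acts_by_ext (sigma tau : hurwitz F -> hurwitz F) (C : 'M[F]_n) :
  linear_on a sigma -> linear_on a tau -> acts_by sigma C -> acts_by tau C ->
  forall v, inV a v -> sigma v = tau v.
Proof.
move=> ls lt sC tC v vV.
by rewrite -(coordK vV) (acts_by_comb ls sC) (acts_by_comb lt tC).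
Qed.

Definition derivmx : 'M[F]_n := mx_of (@hderiv F).

Lemma comb_deriv (c : 'cV[F]_n) : hderiv (comb c) = comb (derivmx *m c).
Proof.
apply: acts_by_comb; first by [].
by apply: acts_by_mx_of => j; apply: inV_deriv.
Qed.

Lemma ev_deriv (p : nat) : ev y p.+1 = ev y p *m derivmx.
Proof.
apply/rowP => j; rewrite mxE -[LHS]/(hderiv (y j) p) -comb_col1 comb_deriv combE.
by rewrite mulmxA colE mulmxA mulmx1 -colE [LHS]mxE.
Qed.

Hypothesis one_sol : inV a (hconst 1).

Definition constvec : 'cV[F]_n := coord (hconst 1).

Lemma comb_constvec (x : F) : comb (x *: constvec) = hconst x.
Proof.
rewrite -[_ *: _]addr0 comb_lin coordK //.
apply: functional_extensionality => p; rewrite combE mulmx0 mxE addr0 /hconst.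
by case: eqP; rewrite ?mulr1 ?mulr0.
Qed.

Definition stab_mx (C : 'M[F]_n) : Prop :=
  [/\ C \in unitmx, C *m derivmx = derivmx *m C & C *m constvec = constvec].

(* The matrix of a k-differential automorphism of V commutes with D (sigma
   commutes with ') and fixes e (sigma fixes 1). *)
Lemma diffAut_stab (sigma : hurwitz F -> hurwitz F) :
  diffAut a sigma -> stab_mx (mx_of sigma).
Proof.
case=> sV [lin [inj [_ [der const]]]].
have sC := acts_by_comb lin (acts_by_mx_of (fun j => sV _ (yV j))).
split.
- apply: unitmx_ker => c Cc; apply: comb_inj; apply: (inj _ _ (comb_sol _) (comb_sol _)).
  by rewrite !sC Cc mulmx0.
- apply: mulmx_colP => c; apply: comb_inj.
  by rewrite -!mulmxA -sC -comb_deriv (der _ (comb_sol _)) sC comb_deriv.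
- by apply: comb_inj; rewrite -sC coordK // const.
Qed.

Definition mx_map (C : 'M[F]_n) (v : hurwitz F) : hurwitz F := comb (C *m coord v).

Lemma mx_map_comb (C : 'M[F]_n) (c : 'cV[F]_n) : mx_map C (comb c) = comb (C *m c).
Proof. by rewrite /mx_map combK. Qed.

(* Conversely such a C is the matrix of a differential automorphism: the map
   with matrix C is bijective (C invertible), commutes with ' (C D = D C) and
   fixes the constants (C e = e). *)
Lemma stab_diffAut (C : 'M[F]_n) :
  stab_mx C -> diffAut a (mx_map C) /\ acts_by (mx_map C) C.
Proof.
case=> Cu CD Cconst; split; last first.
  by move=> j; rewrite -{1}comb_col1 mx_map_comb lcomb_col !colE mul1mx.
split=> [v _|]; first exact: comb_sol.
split=> [x v w vV wV|].
  rewrite -(coordK vV) -(coordK wV) -comb_lin !mx_map_comb.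
  by rewrite mulmxDr -scalemxAr comb_lin.
split=> [v w vV wV|].
  by rewrite -(coordK vV) -(coordK wV) !mx_map_comb => /comb_inj/(can_inj (mulKmx Cu)) ->.
split=> [w wV|].
  exists (comb (invmx C *m coord w)); first exact: comb_sol.
  by rewrite mx_map_comb mulKVmx // coordK.
split=> [v vV|x _].
  by rewrite -(coordK vV) comb_deriv !mx_map_comb comb_deriv !mulmxA CD.
by rewrite -comb_constvec mx_map_comb -scalemxAr Cconst.
Qed.

End SolutionBasis.

Lemma sum_indicator (F : comNzRingType) (N c : nat) (f : 'I_N.+1 -> F) :
  \sum_(l < N.+1) (nat_of_ord l == c)%:R * f l =
  if (c < N.+1)%N then f (inord c) else 0.
Proof.
case: ltnP => c_lt.
  rewrite (bigD1 (inord c)) //= inordK // eqxx mul1r big1 ?addr0 // => l l_c.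
  suff /negbTE -> : nat_of_ord l != c by rewrite mul0r.
  by apply: contra l_c => /eqP l_c; apply/eqP/val_inj; rewrite /= inordK.
rewrite big1 // => l _; suff /negbTE -> : nat_of_ord l != c by rewrite mul0r.
by apply/eqP; have := ltn_ord l; lia.
Qed.

Lemma mul_ushift_l (F : comNzRingType) (p q : nat) (X : 'M[F]_(p.+1, q)) i j :
  (ushift F p *m X) i j = if (i < p)%N then X (inord i.+1) j else 0.
Proof. by rewrite mxE; under eq_bigr do rewrite mxE; rewrite sum_indicator ltnS. Qed.

Lemma mul_ushift_r (F : comNzRingType) (p q : nat) (X : 'M[F]_(p, q.+1)) i j :
  (X *m ushift F q) i j = if (0 < j)%N then X i (inord j.-1) else 0.
Proof.
rewrite mxE; under eq_bigr do rewrite mxE mulrC.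
case: j => [[|j] j_lt] /=; first by rewrite big1 // => l _; rewrite mul0r.
under eq_bigr => l _ do rewrite eqSS eq_sym.
by rewrite sum_indicator (ltn_trans _ j_lt).
Qed.

(* If (al + u) X = X (be + u) with al <> be, then X = 0: induction on the
   distance of the entry X i j to the lower left corner. *)
Lemma sylvester_zero (F : fieldType) (p q : nat) (X : 'M[F]_(p.+1, q.+1)) (al be : F) :
  al != be -> (al%:M + ushift F p) *m X = X *m (be%:M + ushift F q) -> X = 0.
Proof.
move=> al_be eqX.
have XE (i : 'I_p.+1) (j : 'I_q.+1) : (al - be) * X i j =
    (if (0 < j)%N then X i (inord j.-1) else 0)
    - (if (i < p)%N then X (inord i.+1) j else 0).
  have := congr1 (fun M : 'M[F]_(p.+1, q.+1) => M i j) eqX.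
  rewrite /= mulmxDl mulmxDr mul_scalar_mx mul_mx_scalar [LHS]mxE [RHS]mxE.
  rewrite mul_ushift_l mul_ushift_r !mxE.
  set A := (if _ then _ else _); set B := (if _ then _ else _) => E.
  rewrite mulrBl; have -> : al * X i j = be * X i j + B - A by rewrite -E addrK.
  by ring.
suff key mu (i : 'I_p.+1) (j : 'I_q.+1) : (p - i + j < mu)%N -> X i j = 0.
  by apply/matrixP => i j; rewrite mxE (key (p - i + j).+1).
elim: mu i j => [//|mu IH] i j bound.
have /eqP : (al - be) * X i j = 0.
  have i_lt := ltn_ord i; have j_lt := ltn_ord j.
  rewrite XE; case: ifP => j_gt0; case: ifP => i_lt_p; rewrite ?subr0 ?sub0r ?oppr0 //.
  - rewrite (IH i (inord j.-1)); last by rewrite inordK; lia.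
    by rewrite (IH (inord i.+1) j) ?subr0 // inordK; lia.
  - by rewrite (IH i (inord j.-1)) // inordK; lia.
  - by rewrite (IH (inord i.+1) j) ?oppr0 // inordK; lia.
by rewrite mulf_eq0 subr_eq0 (negbTE al_be) => /eqP.
Qed.

(* A matrix commuting with u whose first column is the first basis vector
   is upper triangular with ones on the diagonal (it is a polynomial in u). *)
Lemma comm_ushift_unip (F : comNzRingType) (mt : nat) (g : 'M[F]_mt.+1) :
  g *m ushift F mt = ushift F mt *m g ->
  (forall i : 'I_mt.+1, g i 0 = (nat_of_ord i == 0)%:R) ->
  (forall i j : 'I_mt.+1, (j < i)%N -> g i j = 0) /\ (forall i, g i i = 1).
Proof.
move=> g_comm g_col0.
suff key jn (i j : 'I_mt.+1) : nat_of_ord j = jn -> (j <= i)%N ->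
    g i j = (nat_of_ord i == nat_of_ord j)%:R.
  split=> [i j j_lt_i|i]; last by rewrite (key i) // eqxx.
  by rewrite (key j) //; [case: eqP => //; lia | exact: ltnW].
elim: jn i j => [|jn IH] i j j_jn j_le_i.
  by have -> : j = 0 by apply: val_inj; rewrite /= j_jn.
have i_lt := ltn_ord i; have j_lt := ltn_ord j.
have := congr1 (fun M : 'M[F]_mt.+1 => M (inord i.-1) j) g_comm.
rewrite /= mul_ushift_l mul_ushift_r inordK; last lia.
have -> : (0 < j)%N by lia.
have -> : (i.-1 < mt)%N by lia.
have -> : inord (i.-1).+1 = i by apply: val_inj; rewrite /= inordK; lia.
move=> <-; rewrite IH ?inordK //; try lia.
by congr (_%:R); apply/eqP/eqP; lia.
Qed.

Lemma Rank_ind (r : nat) (p_ : 'I_r -> nat) (P : 'I_(\sum_(i < r) p_ i) -> Prop) :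
  (forall t (i : 'I_(p_ t)), P (tagnat.Rank t i)) -> forall s, P s.
Proof. by move=> PR s; rewrite -(tagnat.sig2K s); exact: PR. Qed.

Lemma mxblock_Rank (T : Type) (r : nat) (p_ : 'I_r -> nat)
    (B : forall i j, 'M[T]_(p_ i, p_ j)) t t' i j :
  (\mxblock_(t, t') B t t') (tagnat.Rank t i) (tagnat.Rank t' j) = B t t' i j.
Proof. by have /matrixP/(_ i j) := mxblockK B t t'; rewrite mxE. Qed.

Lemma mxdiag_Rank (V : nmodType) (r : nat) (p_ : 'I_r -> nat)
    (g : forall i, 'M[V]_(p_ i)) t i j :
  (\mxdiag_(t < r) g t) (tagnat.Rank t i) (tagnat.Rank t j) = g t i j.
Proof. by rewrite /mxdiag mxblock_Rank eqxx conform_mx_id. Qed.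

Lemma mxdiag_Rank_neq (V : nmodType) (r : nat) (p_ : 'I_r -> nat)
    (g : forall i, 'M[V]_(p_ i)) t t' i j :
  t != t' -> (\mxdiag_(t < r) g t) (tagnat.Rank t i) (tagnat.Rank t' j) = 0.
Proof. by move=> t_t'; rewrite /mxdiag mxblock_Rank (negbTE t_t') mxE. Qed.

Lemma mxdiag_mul (R : pzSemiRingType) (r : nat) (p_ : 'I_r -> nat)
    (g h : forall i, 'M[R]_(p_ i)) :
  \mxdiag_(t < r) g t *m \mxdiag_(t < r) h t = \mxdiag_(t < r) (g t *m h t).
Proof.
rewrite {1}/mxdiag mul_mxblock_mxdiag /mxdiag; apply: eq_mxblock => i j.
by case: eqVneq => [<-|_]; rewrite ?conform_mx_id ?mul0mx.
Qed.

Section JordanBlocks.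
Variables (F : fieldType) (r : nat) (alpha : 'I_r -> F) (m : 'I_r -> nat).
Local Notation N := (\sum_(t < r) (m t).+1)%N.

Definition jordan : 'M[F]_N := \mxdiag_(t < r) ((alpha t)%:M + ushift F (m t)).

Definition base_vec (t : 'I_r) : 'cV[F]_N := delta_mx (tagnat.Rank t ord0) 0.

Definition gamma_blocks (G : 'M[F]_N) : Prop :=
  exists g : forall t, 'M[F]_((m t).+1),
    (forall t, inGamma (alpha t) (g t)) /\ G = \mxdiag_(t < r) g t.

Lemma base_vecE (q : nat) (G : 'M[F]_(q, N)) t s : (G *m base_vec t) s 0 = G s (tagnat.Rank t ord0).
Proof. by rewrite -colE mxE. Qed.

Lemma gamma_blocks_stab (G : 'M[F]_N) : gamma_blocks G ->
  [/\ G \in unitmx, G *m jordan = jordan *m G &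
      forall t, alpha t = 0 -> G *m base_vec t = base_vec t].
Proof.
case=> g [g_gamma ->]; split.
- suff /mulmx1_unit[] : \mxdiag_(t < r) g t *m \mxdiag_(t < r) invmx (g t) = 1%:M by [].
  rewrite mxdiag_mul -(mxdiagZ (p_ := fun t => (m t).+1)); apply: eq_mxdiag => t.
  by have [gU _ _] := g_gamma t; rewrite mulmxV.
- rewrite /jordan !mxdiag_mul; apply: eq_mxdiag => t; have [_ g_comm _] := g_gamma t.
  by rewrite mulmxDr mulmxDl mul_mx_scalar mul_scalar_mx g_comm.
move=> t al0; apply/matrixP => + j; rewrite ord1; apply: Rank_ind => t' i.
rewrite base_vecE [RHS]mxE -val_eqE tagnat.eq_Rank /=.
have [e|t'_t] := eqVneq t' t; last by rewrite mxdiag_Rank_neq.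
subst t'.
have [_ _ /(_ al0) [g_low g_diag]] := g_gamma t; rewrite mxdiag_Rank andbT.
have [i0|i_gt0] := posnP i; last by rewrite g_low.
by have -> : i = ord0 by apply: val_inj.
Qed.

Hypothesis alpha_inj : injective alpha.

Lemma comm_jordan (G : 'M[F]_N) : G *m jordan = jordan *m G ->
  G = (\mxdiag_(t < r) submxblock G t t) /\
  forall t, submxblock G t t *m ushift F (m t) = ushift F (m t) *m submxblock G t t.
Proof.
move=> G_comm; set B := fun i j => submxblock G i j.
have GB : \mxblock_(i, j) B i j = G by exact: submxblockK.
have B_comm i j : B i j *m ((alpha j)%:M + ushift F (m j)) =
    ((alpha i)%:M + ushift F (m i)) *m B i j.
  move: G_comm; rewrite -GB /jordan mul_mxblock_mxdiag mul_mxdiag_mxblock.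
  by move/mxblockP => /(_ i j); rewrite !mxblockK.
have B_off i j : i != j -> B i j = 0.
  move=> i_j; apply: (sylvester_zero (al := alpha i) (be := alpha j)) => //.
  by apply: contra i_j => /eqP /alpha_inj ->.
split.
  rewrite -{1}GB /mxdiag; apply: eq_mxblock => i j.
  by case: eqVneq => [<-|/B_off]; rewrite ?conform_mx_id.
move=> t; have := B_comm t t.
by rewrite mulmxDr mulmxDl mul_mx_scalar mul_scalar_mx => /addrI.
Qed.

Lemma stab_gamma_blocks (G : 'M[F]_N) :
  G \in unitmx -> G *m jordan = jordan *m G ->
  (forall t, alpha t = 0 -> G *m base_vec t = base_vec t) -> gamma_blocks G.
Proof.
move=> GU G_comm G_base; have [GE blk_comm] := comm_jordan G_comm.
have Gi_comm : invmx G *m jordan = jordan *m invmx G.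
  by rewrite -{1}(mulmxK GU jordan) -G_comm !mulmxA mulVmx // mul1mx.
have [GiE _] := comm_jordan Gi_comm.
exists (fun t => submxblock G t t); split=> // t; split.
- have := mulmxV GU; rewrite {1}GE GiE mxdiag_mul.
  rewrite -(mxdiagZ (p_ := fun t => (m t).+1)).
  by move/eq_mxdiagP => /(_ t) /mulmx1_unit [].
- exact: blk_comm.
- move=> al0; apply: comm_ushift_unip; first exact: blk_comm.
  move=> i; have /matrixP/(_ (tagnat.Rank t i) 0) := G_base t al0.
  rewrite base_vecE [RHS]mxE -val_eqE tagnat.eq_Rank eqxx andbT /= => <-.
  by rewrite /submxblock mxE.
Qed.

End JordanBlocks.

Section ExponentialSolutions.
Variable F : fieldType.

Lemma divpow_expE (j : nat) (al : F) (p : nat) :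
  hmul (hdivpow F j) (hexp al) p =
  if (j <= p)%N then 'C(p, j)%:R * al ^+ (p - j) else 0.
Proof.
rewrite /hmul /hdivpow /hexp.
transitivity (\sum_(l < p.+1) (nat_of_ord l == j)%:R * ('C(p, l)%:R * al ^+ (p - l))).
  by apply: eq_bigr => l _; case: (nat_of_ord l == j); rewrite ?mulr1 ?mulr0 ?mul1r ?mul0r.
by rewrite sum_indicator ltnS; case: ifP => // j_le; rewrite inordK.
Qed.

Lemma divpow_exp_deriv (j : nat) (al : F) (p : nat) :
  hmul (hdivpow F j) (hexp al) p.+1 =
  al * hmul (hdivpow F j) (hexp al) p +
  (if (0 < j)%N then hmul (hdivpow F j.-1) (hexp al) p else 0).
Proof.
rewrite !divpow_expE; case: j => [|j] /=; first by rewrite !bin0 !subn0 exprS addr0; ring.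
rewrite ltnS; case: (ltngtP j p) => [j_lt|j_gt|<-].
- rewrite binS natrD (_ : p - j = (p - j.+1).+1)%N; last lia.
  by rewrite (_ : p.+1 - j.+1 = (p - j.+1).+1)%N; [rewrite exprS; ring | lia].
- by rewrite mulr0 addr0.
- by rewrite !binn !subnn mulr0 add0r.
Qed.

Variables (r : nat) (alpha : 'I_r -> F) (m : 'I_r -> nat).
Local Notation N := (\sum_(t < r) (m t).+1)%N.

Definition zrow (p : nat) : 'rV[F]_N :=
  \row_s hmul (hdivpow F (tagnat.sig2 s)) (hexp (alpha (tagnat.sig1 s))) p.

Lemma zrowS (p : nat) : zrow p.+1 = zrow p *m jordan alpha m.
Proof.
have zrowE q : zrow q =
    \mxrow_(t < r) \row_(i < (m t).+1) hmul (hdivpow F i) (hexp (alpha t)) q.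
  by apply/matrixP => i s; rewrite !mxE.
rewrite !zrowE /jordan mul_mxrow_mxdiag; apply: eq_mxrow => t.
apply/rowP => j; symmetry; rewrite mulmxDr mul_mx_scalar mxE mul_ushift_r.
rewrite [X in X + _]mxE ![_ 0 j]mxE divpow_exp_deriv; congr (_ + _).
by case: ifP => // j_gt0; rewrite mxE inordK //; have := ltn_ord j; lia.
Qed.

Lemma zrow_base (t : 'I_r) (p : nat) :
  alpha t = 0 -> (zrow p *m base_vec F m t) 0 0 = hconst 1 p.
Proof.
move=> al0; rewrite base_vecE mxE.
set s0 := tagnat.Rank _ _.
have -> : nat_of_ord (tagnat.sig2 s0) = 0%N by rewrite /s0 tagnat.Rank2K.
rewrite /s0 tagnat.Rank1K al0 divpow_expE /hconst.
by case: p => [|p]; rewrite /= ?expr0 ?mulr1 ?expr0n ?mulr0 ?bin0.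
Qed.

End ExponentialSolutions.

Lemma charpoly_coef0 (k : nzRingType) (n : nat) (a : 'I_n -> k) :
  (0 < n)%N -> (forall i : 'I_n, nat_of_ord i = 0%N -> a i = 0) ->
  ('X^n + \sum_(i < n) (a i)%:P * 'X^i)`_0 = 0.
Proof.
move=> n_gt0 a0; rewrite coefD coefXn coef_sum big1 => [|i _].
  by rewrite eq_sym eqn0Ngt n_gt0 addr0.
rewrite coefCM coefXn; case: eqP => [i_0|]; last by rewrite mulr0.
by rewrite a0 ?mul0r.
Qed.

Lemma prod_root0 (K : idomainType) (r : nat) (alpha : 'I_r -> K) (m : 'I_r -> nat) :
  (\prod_(t < r) ('X - (alpha t)%:P) ^+ (m t).+1).[0] = 0 -> exists t, alpha t = 0.
Proof.
rewrite horner_prod => /eqP /prodf_eq0 [t _].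
by rewrite horner_exp hornerXsubC expf_eq0 sub0r oppr_eq0 => /andP[_ /eqP]; exists t.
Qed.

Section GaloisGroup.
Variables (k K : fieldType) (iota : {rmorphism k -> K}).
Variables (r : nat) (alpha : 'I_r -> K) (m : 'I_r -> nat).
Local Notation N := (\sum_(t < r) (m t).+1)%N.
Variables (a : 'I_N -> k) (y : 'I_N -> hurwitz k).
Hypotheses (yV : forall i, inV a (y i))
  (y_free : forall c : 'I_N -> k, lcomb c y = (fun _ => 0) -> forall i, c i = 0)
  (y_span : forall v, inV a v -> exists c : 'I_N -> k, v = lcomb c y)
  (one_sol : inV a (hconst 1)).
Variable T : 'M[K]_N.
Hypotheses (T_unit : T \in unitmx)
  (YT_Z : forall p, ev (fun i q => iota (y i q)) p *m T = zrow alpha m p).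

Lemma ev_map (p : nat) : ev (fun i q => iota (y i q)) p = map_mx iota (ev y p).
Proof. by apply/rowP => i; rewrite !mxE. Qed.

Lemma initmx_map_unit : initmx (fun i q => iota (y i q)) \in unitmx.
Proof.
have -> : initmx (fun i q => iota (y i q)) = map_mx iota (initmx y).
  by apply/matrixP => i j; rewrite !mxE.
by rewrite map_unitmx (initmx_unit yV y_free).
Qed.

(* From Y T = Z and Z' = Z J:  J = T^-1 D T. *)
Lemma jordan_conj : jordan alpha m = invmx T *m map_mx iota (derivmx y) *m T.
Proof.
rewrite -mulmxA; apply: (canRL (mulKmx T_unit)).
apply: (ev_inj initmx_map_unit) => p.
by rewrite !mulmxA YT_Z -zrowS -YT_Z !ev_map (ev_deriv yV y_span) map_mxM.
Qed.

(* From Y T = Z and z_{0,t} = 1 for alpha_t = 0:  T^-1 e is the first basis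
   vector of block t. *)
Lemma base_vec_conj (t : 'I_r) :
  alpha t = 0 -> base_vec K m t = invmx T *m map_mx iota (constvec y).
Proof.
move=> al0; apply: (canRL (mulKmx T_unit)).
apply: (ev_inj initmx_map_unit) => p; apply/matrixP => i j; rewrite !ord1.
rewrite mulmxA YT_Z zrow_base // ev_map -map_mxM mxE -combE /constvec (coordK y_span) //.
by rewrite /hconst; case: eqP; rewrite ?rmorph1 ?raddf0.
Qed.

Definition target (C : 'M[k]_N) : Prop :=
  C \in unitmx /\ exists g : forall t, 'M[K]_((m t).+1),
    (forall t, inGamma (alpha t) (g t)) /\
    map_mx iota C = T *m \mxdiag_(t < r) g t *m invmx T.

Hypotheses (alpha_inj : injective alpha) (root0 : exists t, alpha t = 0).

(* Conjugating by T, the target group is the stabiliser of D and e. *)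
Lemma target_stabP (C : 'M[k]_N) : target C <-> stab_mx y C.
Proof.
pose conj (X : 'M[k]_N) := invmx T *m map_mx iota X *m T.
have conjM X Y : conj X *m conj Y = conj (X *m Y).
  by rewrite /conj map_mxM !mulmxA mulmxK.
have conj_col_inj q (X Y : 'M[k]_(N, q)) :
    invmx T *m map_mx iota X = invmx T *m map_mx iota Y -> X = Y.
  by move/(can_inj (mulKVmx T_unit)); apply: map_mx_inj.
have conj_inj : injective conj by move=> X Y /(can_inj (mulmxK T_unit))/conj_col_inj.
have GU : (conj C \in unitmx) = (C \in unitmx).
  by rewrite !unitmx_mul unitmx_inv map_unitmx T_unit andbT.
have G_comm : (conj C *m jordan alpha m = jordan alpha m *m conj C) <->
    C *m derivmx y = derivmx y *m C.
  by rewrite jordan_conj -/(conj _) !conjM; split => [/conj_inj|->].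
have G_base : (forall t, alpha t = 0 -> conj C *m base_vec K m t = base_vec K m t) <->
    C *m constvec y = constvec y.
  have conj_base t : alpha t = 0 ->
      conj C *m base_vec K m t = invmx T *m map_mx iota (C *m constvec y).
    by move=> al0; rewrite base_vec_conj // /conj !mulmxA mulmxK // map_mxM mulmxA.
  have [t0 t0_root] := root0; split => [/(_ t0 t0_root)|CX t al0].
    by rewrite conj_base // base_vec_conj // => /conj_col_inj.
  by rewrite conj_base // CX base_vec_conj.
split => [[CU [g [g_gamma CE]]]|[CU CD CX]].
  have : gamma_blocks alpha (conj C).
    by exists g; split => //; rewrite /conj CE !mulmxA mulVmx // mul1mx mulmxKV.
  by case/gamma_blocks_stab => _ /G_comm CD /G_base CX.
have [|g [g_gamma GE]] := stab_gamma_blocks alpha_inj _ (proj2 G_comm CD) (proj2 G_base CX).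
  by rewrite GU.
split => //; exists g; split => //.
by rewrite -GE /conj !mulmxA mulmxV // mul1mx mulmxK.
Qed.

End GaloisGroup.

Unset Implicit Arguments. Set Strict Implicit. Set Printing Implicit Defensive.
Theorem mainTheorem9
  (k : fieldType) (K : closedFieldType) (iota : {rmorphism k -> K})
  (* K is an algebraic closure of k (via iota) *)
  (Kalg : forall x : K, exists2 q : {poly k}, q != 0 & root (map_poly iota q) x)
  (n : nat) (hn1 : (0 < n)%N)
  (a : 'I_n -> k) (ha0 : forall i : 'I_n, nat_of_ord i = 0%N -> a i = 0)
  (r : nat) (alpha : 'I_r -> K) (m : 'I_r -> nat)
  (alpha_inj : injective alpha)
  (hroots : map_poly iota ('X^n + \sum_(i < n) (a i)%:P * 'X^i)
            = \prod_(t < r) ('X - (alpha t)%:P) ^+ (m t).+1)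
  (hn : (\sum_(t < r) (m t).+1)%N = n)
  (y : 'I_n -> hurwitz k)
  (yV : forall i, inV a (y i))
  (y_free : forall c : 'I_n -> k, lcomb c y = (fun _ => 0) -> forall i, c i = 0)
  (y_span : forall v, inV a v -> exists c : 'I_n -> k, v = lcomb c y)
  (T : 'M[K]_n) (T_unit : T \in unitmx)
  (YT_Z : forall j : 'I_n,
      lcomb (fun i => T i j) (fun i p => iota (y i p)) = @Zvec K r alpha m n hn j) :
  let inS (C : 'M[k]_n) :=
    C \in unitmx /\
    exists g : forall t : 'I_r, 'M[K]_((m t).+1),
      (forall t, inGamma (alpha t) (g t)) /\
      map_mx iota C = T *m castmx (hn, hn) (\mxdiag_(t < r) g t) *m invmx T in
  let actsBy (sigma : hurwitz k -> hurwitz k) (C : 'M[k]_n) :=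
    forall j : 'I_n, sigma (y j) = lcomb (fun i => C i j) y in
  (* sigma |-> C_sigma is well defined, with values in the target group *)
  (forall sigma, diffAut a sigma ->
     exists C, actsBy sigma C /\ inS C) /\
  (forall sigma C C', actsBy sigma C -> actsBy sigma C' -> C = C') /\
  (* homomorphism *)
  (forall sigma tau C D, diffAut a sigma -> diffAut a tau ->
     actsBy sigma C -> actsBy tau D -> actsBy (sigma \o tau) (C *m D)) /\
  (* injective (elements of G(V|k) are maps on V) *)
  (forall sigma tau C, diffAut a sigma -> diffAut a tau ->
     actsBy sigma C -> actsBy tau C -> forall v, inV a v -> sigma v = tau v) /\
  (* onto the target group *)
  (forall C, inS C -> exists2 sigma, diffAut a sigma & actsBy sigma C).
Proof.
subst n => inS actsBy.
have one_sol := inV_hconst 1 ha0 hn1.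
have root0 : exists t, alpha t = 0.
  have := congr1 (horner^~ 0) hroots.
  by rewrite /= horner_coef0 coef_map charpoly_coef0 // raddf0 => /esym/prod_root0.
have YZ p : ev (fun i q => iota (y i q)) p *m T = zrow alpha m p.
  by apply/rowP => j; rewrite -lcomb_ev YT_Z /Zvec cast_ord_id mxE.
have inSP C : inS C <-> stab_mx y C.
  exact: (target_stabP yV y_free y_span one_sol T_unit YZ alpha_inj root0).
split; [|split; [|split; [|split]]].
- move=> sigma sigma_aut; exists (mx_of y sigma); split.
    by apply: (acts_by_mx_of y_span) => j; apply: (proj1 sigma_aut).
  by apply/inSP; apply: (diffAut_stab yV y_free y_span one_sol).
- exact: (acts_by_uniq yV y_free).
- by move=> sigma tau C D [_ [lin _]] _; apply: (acts_by_comp yV).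
- by move=> sigma tau C [_ [ls _]] [_ [lt _]]; apply: (acts_by_ext yV y_span).
move=> C /inSP /(stab_diffAut yV y_free y_span one_sol) [aut acts].
by exists (mx_map y C).
Qed.
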